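(* An almost discrete (Tychonoff) space $X$ is weakly Grothendieck if and only if $t(X)=\omega$.
   Context: A space is almost discrete if it has exactly one non-isolated point. $C_p(X)$ is the space of continuous real-valued functions on $X$ with the pointwise convergence topology. A space $Z$ is a $g$-space if every subset $A\subseteq Z$ such that every infinite subset of $A$ has an accumulation point in $Z$ has compact closure in $Z$; $X$ is weakly Grothendieck if $C_p(X)$ is a $g$-space. $t(X)$ denotes the tightness of $X$. *)

From HB Require Import structures.
From mathcomp Require Import all_boot all_order all_algebra.
From mathcomp Require Import all_classical all_reals all_analysis.
Unset Printing Implicit Defensive.
Import Order.TTheory GRing.Theory Num.Theory.
Import numFieldTopology.Exports numFieldNormedType.Exports.
Local Open Scope classical_set_scope.
Local Open Scope ring_scope.

Definition tychonoff_space (R : realType) (X : topologicalType) : Prop :=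
  accessible_space X /\
  forall (B : set X) (x : X), closed B -> ~ B x ->
    exists f : X -> R, [/\ continuous f, f x = 0 & forall y, B y -> f y = 1].

Definition almost_discrete (X : topologicalType) : Prop :=
  exists x : X, ~ isolated [set: X] x /\
    forall y : X, y <> x -> isolated [set: X] y.

Definition g_space (Z : topologicalType) : Prop :=
  forall A : set Z,
    (forall B : set Z, B `<=` A -> infinite_set B -> exists z : Z, limit_point B z) ->
    compact (closure A).

Definition RX (R : realType) (X : topologicalType) : topologicalType :=
  {ptws X -> R}%type.

Definition Cp_set (R : realType) (X : topologicalType) : set (RX R X) :=
  fun f : RX R X => continuous (f : X -> R).

Definition Cp (R : realType) (X : topologicalType) : topologicalType :=
  set_type (@Cp_set R X).

Definition weakly_grothendieck (R : realType) (X : topologicalType) : Prop :=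
  g_space (@Cp R X).

(* t(X) = omega, i.e. countable tightness (tightness is by convention an
   infinite cardinal, so t(X) = omega iff t(X) <= omega). *)
Definition tightness_omega (X : topologicalType) : Prop :=
  forall (A : set X) (x : X), closure A x ->
    exists2 B : set X, B `<=` A /\ countable B & closure B x.

From mathcomp Require Import all_boot all_order all_algebra.
From mathcomp Require Import all_classical all_reals all_analysis.
From mathcomp Require Import lra.
Import Order.TTheory GRing.Theory Num.Theory.
Import numFieldTopology.Exports numFieldNormedType.Exports.
Local Open Scope classical_set_scope.
Local Open Scope ring_scope.

(* Let p be the non-isolated point of X; a function on X is continuous as soon
   as it is continuous at p.
   If t(X) = omega and A is relatively countably compact in C_p(X), then A is
   pointwise bounded, so its closure in R^X is compact, and each g in that
   closure is continuous: otherwise p is in the closure of a countable B on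
   which g stays away from g p, and a cluster point in C_p(X) of a sequence
   of A converging to g on {p} u B is continuous at p but agrees with g there.
   Conversely, if p is in the closure of A but in that of no countable subset
   of A, the indicators of countable subsets of A are continuous and form a
   relatively countably compact subset of C_p(X), whose closure in R^X
   contains the discontinuous indicator of A. *)

Lemma infinite_set_injective_seq {T : Type} (B : set T) : infinite_set B ->
  exists2 b : nat -> T, injective b & forall n, B (b n).
Proof.
move=> /infiniteP /card_leP [f].
exists (fun n => val (f (exist _ n (in_setT n)))); last first.
  by move=> n; exact: set_valP.
move=> n m /val_inj /(@inj _ _ _ f _ _ (in_setT _) (in_setT _)).
by move=> /(congr1 val).
Qed.

Lemma infinite_nat_unbounded {I : set nat} (N : nat) : infinite_set I ->
  exists2 n, (N <= n)%N & I n.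
Proof.
move=> Iinf; apply: contrapT => noN; apply: Iinf.
apply: (sub_finite_set _ (finite_II N)) => n In /=.
by rewrite ltnNge; apply/negP => Nn; apply: noN; exists n.
Qed.

Lemma countable_enum {T : Type} (A : set T) : countable A -> A !=set0 ->
  exists2 t : nat -> T, (forall n, A (t n)) &
    forall y, A y -> exists n, t n = y.
Proof.
move=> Acount; case/pfcard_geP: Acount => [-> [] //|[t] _].
exists t => [n|y Ay]; first exact: funS.
by have [n _ tny] := (@surj _ _ _ _ t) y Ay; exists n.
Qed.

Section sequence_cluster.
Context {T : topologicalType}.

Lemma cluster_seqP (f : nat -> T) (z : T) : cluster (f @ \oo) z <->
  forall (P : set nat) (W : set T), (\forall n \near \oo, P n) -> nbhs z W ->
    exists2 n, P n & W (f n).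
Proof.
split=> [cl P W evP zW|freq A W fA zW].
  have fP : (f @ \oo) (f @` P) by apply: filterS evP => n Pn; exists n.
  by have [_ [[n Pn <-] Wfn]] := cl _ _ fP zW; exists n.
by have [n Afn Wfn] := freq _ W fA zW; exists (f n).
Qed.

Lemma cluster_injective_limit_point (f : nat -> T) (z : T) : injective f ->
  cluster (f @ \oo) z -> limit_point (range f) z.
Proof.
move=> finj /cluster_seqP freq U zU.
have [m _ Ufm] := freq _ U (nbhs_infty_ge 0) zU.
have [fmz|fmz] := eqVneq (f m) z; last by exists (f m).
have [n mn Ufn] := freq _ U (nbhs_infty_gt m) zU; exists (f n); split => //.
by rewrite -fmz; apply/eqP => /finj nm; move: mn; rewrite nm ltnn.
Qed.

Definition relatively_countably_compact (A : set T) := forall B, B `<=` A ->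
  infinite_set B -> exists z, limit_point B z.

Hypothesis T_T1 : accessible_space T.

Lemma limit_point_nbhs_infinite {E U : set T} {z : T} :
  limit_point E z -> nbhs z U -> infinite_set (U `&` E).
Proof.
move=> Ez zU UEfin.
have : closed (U `&` E `\ z).
  by apply: (accessible_finite_set_closed.1 T_T1); exact: finite_setD.
rewrite -openC => oC; have zC : nbhs z (~` (U `&` E `\ z)).
  by apply: open_nbhs_nbhs; split => //= -[_]; apply.
have [y [/eqP yz Ey [Uy]]] :
    exists y, [/\ y != z, E y & (U `&` ~` (U `&` E `\ z)) y].
  by apply: Ez; exact: filterI.
by apply; split.
Qed.

Lemma limit_point_range_cluster (f : nat -> T) (z : T) :
  limit_point (range f) z -> cluster (f @ \oo) z.
Proof.
move=> fz; apply/cluster_seqP => P W [N _ NP] zW.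
have := limit_point_nbhs_infinite fz zW.
move=> /infinite_setD/(_ (finite_image f (finite_II N))).
move=> /infinite_setN0 [y [[Wy [m _ fmy]] yN]]; subst y.
exists m => //; apply: NP; rewrite /= leqNgt; apply/negP => mN.
by apply: yN; exists m.
Qed.

Lemma relatively_countably_compact_cluster {A : set T} {f : nat -> T} :
  relatively_countably_compact A -> (forall n, A (f n)) ->
  exists z, cluster (f @ \oo) z.
Proof.
move=> Arcc Af; have [/finite_range_cst_subsequence [x [I Iinf Ix]]|finf] :=
  pselect (finite_set (range f)).
  exists x; apply/cluster_seqP => P W [N _ NP] xW.
  have [n Nn In] := infinite_nat_unbounded N Iinf.
  by exists n; [exact: NP | rewrite (Ix n).1 //; exact: nbhs_singleton].
have [z fz] : exists z, limit_point (range f) z.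
  by apply: Arcc finf => _ [n _ <-].
by exists z; exact: limit_point_range_cluster.
Qed.

End sequence_cluster.

Lemma cluster_image {S T : topologicalType} (F : set_system S) (phi : S -> T)
    (z : S) :
  {for z, continuous phi} -> cluster F z -> cluster (phi @ F) (phi z).
Proof.
move=> phiz Fz A B FA /phiz Bz.
by have [s [As Bs]] := Fz _ _ FA Bz; exists (phi s).
Qed.

Lemma image_closure_subset {S T : topologicalType} {f : S -> T} {A : set S} :
  continuous f -> f @` closure A `<=` closure (f @` A).
Proof.
move=> fcont _ [a Aa <-].
suff : closure A `<=` f @^-1` closure (f @` A) by apply.
have /closure_id -> : closed (f @^-1` closure (f @` A)).
  by move/continuous_closedP : fcont; apply; exact: closed_closure.
by apply: closureS => b Ab; apply: subset_closure; exists b.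
Qed.

Lemma not_closure_nbhsC {T : topologicalType} {C : set T} {x : T} :
  ~ closure C x -> nbhs x (~` C).
Proof. by move=> nCx; have : (~` C)° x by rewrite interiorC. Qed.

Section set_type_topology.
Context {T : topologicalType} (P : set T).

Lemma nbhs_set_typeP (k : set_type P) (U : set (set_type P)) : nbhs k U <->
  exists2 V : set T, nbhs (val k) V & val @^-1` V `<=` U.
Proof.
split=> [|[V]].
  rewrite nbhsE => -[_ [[A oA <-] Ak] AU].
  by exists A => //; exists A.
rewrite nbhsE => -[A [oA Ak] AV] VU; rewrite nbhsE.
by exists (val @^-1` A); [split => //; exists A | move=> k' /AV /VU].
Qed.

Lemma set_val_continuous : continuous (val : set_type P -> T).
Proof. by move=> k V Vk; apply/nbhs_set_typeP; exists V. Qed.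

Lemma accessible_set_type : accessible_space T -> accessible_space (set_type P).
Proof.
move=> T_T1 x y /eqP xy.
have /T_T1 [A [oA xA yA]] : val x != val y by apply/eqP => /val_inj.
exists (val @^-1` A); split; first by exists A.
- by rewrite inE; move: xA; rewrite inE.
- by rewrite inE; move: yA; rewrite inE.
Qed.

Lemma cluster_set_val {F : set_system (set_type P)} {k : set_type P} :
  Filter F -> cluster (val @ F) (val k) -> cluster F k.
Proof.
move=> FF Fk B W FB /nbhs_set_typeP [V kV VW].
have FvalB : F (val @^-1` (val @` B)) by apply: filterS FB => b Bb; exists b.
have [_ [[b Bb <-] Vb]] := Fk _ _ FvalB kV.
by exists b; split => //; exact: VW.
Qed.

End set_type_topology.

Section pointwise_topology.
Variables (R : realType) (X : topologicalType).

Lemma nbhs_ptws_lt (g : RX R X) (x : X) {e : R} : 0 < e ->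
  nbhs g [set h : RX R X | `|h x - g x| < e].
Proof.
move=> e0.
apply: (@proj_continuous X (fun _ => R) x g [set r | `|r - g x| < e]).
by apply/nbhs_ballP; exists e => //= y; rewrite /ball /= distrC.
Qed.

Lemma RX_hausdorff : hausdorff_space (RX R X).
Proof. by apply: hausdorff_product => _; exact: Rhausdorff. Qed.

Lemma Cp_accessible : accessible_space (Cp R X).
Proof.
by apply: accessible_set_type; apply: hausdorff_accessible; exact: RX_hausdorff.
Qed.

Lemma Cp_cluster_eval (f : nat -> Cp R X) (h : Cp R X) (x : X) (l : R) :
  cluster (f @ \oo) h -> (fun n => val (f n) x) @ \oo --> l -> val h x = l.
Proof.
move=> fh fl; pose ev (k : Cp R X) := val k x.
have evh : cluster (ev \o f @ \oo) (ev h).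
  apply: cluster_image fh; exact: (continuous_comp
    (@set_val_continuous _ _ h) (@proj_continuous X (fun _ => R) x _)).
by apply/esym/Rhausdorff; exact: cvg_cluster fl _ evh.
Qed.

Lemma nbhs_Cp_lt (h : Cp R X) (x : X) {e : R} : 0 < e ->
  nbhs h [set k : Cp R X | `|val k x - val h x| < e].
Proof.
move=> e0; apply/nbhs_set_typeP.
by exists [set k | `|k x - val h x| < e]; [exact: nbhs_ptws_lt|].
Qed.

Lemma relatively_countably_compact_Cp_bounded (A : set (Cp R X)) (x : X) :
  relatively_countably_compact A ->
  exists M : R, forall a, A a -> `|val a x| <= M.
Proof.
move=> Arcc; apply: contrapT => unbounded.
have /choice [f Af] : forall n : nat, exists a, A a /\ n%:R < `|val a x|.
  move=> n; apply: contrapT => nbig; apply: unbounded; exists n%:R => a Aa.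
  by rewrite leNgt; apply/negP => ?; apply: nbig; exists a.
have [h /cluster_seqP fh] := relatively_countably_compact_cluster Cp_accessible
  Arcc (fun n => (Af n).1).
have [n hn fnh] :=
  fh _ _ (nbhs_infty_gtr (`|val h x| + 1)) (nbhs_Cp_lt h x ltr01).
have := ler_distD (val h x) (val (f n) x) 0; rewrite !subr0.
by move: fnh (Af n).2 => /=; lra.
Qed.

Lemma ptws_closure_seq (A : set (Cp R X)) (g : RX R X) (t : nat -> X) :
  closure (val @` A) g -> exists2 f : nat -> Cp R X, (forall n, A (f n)) &
    forall i, (fun n => val (f n) (t i)) @ \oo --> g (t i).
Proof.
move=> Ag.
have /choice [f Af] : forall n : nat, exists a, A a /\
    forall i : 'I_n.+1, `|val a (t i) - g (t i)| < harmonic n.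
  move=> n; have : \forall k \near g,
      forall i : 'I_n.+1, `|k (t i) - g (t i)| < harmonic n.
    apply: (filter_forall (nbhs_filter g)) => i.
    exact: nbhs_ptws_lt (harmonic_gt0 n).
  by move=> /Ag [_ [[a Aa <-] close]]; exists a.
exists f => [n|i]; first exact: (Af n).1.
apply/cvgrPdist_lt => e e0; near=> n.
have lt_in : (i < n.+1)%N by near: n; exact: nbhs_infty_ge.
rewrite distrC; apply: lt_trans ((Af n).2 (Ordinal lt_in)) _.
near: n; have /cvgrPdist_lt/(_ e e0) := @cvg_harmonic R.
by apply: filterS => n; rewrite sub0r normrN ger0_norm // harmonic_ge0.
Unshelve. all: by end_near.
Qed.

Lemma compact_Cp_limit_point {K : set (RX R X)} {b : nat -> Cp R X} :
  compact K -> K `<=` Cp_set R X -> injective b -> (forall n, K (val (b n))) ->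
  exists z, limit_point (range b) z.
Proof.
move=> Kcompact KCp binj Kb.
have [z [Kz bz]] : K `&` cluster (val @ (b @ \oo)) !=set0.
  by apply: Kcompact; exists 0%N => // n _; exact: Kb.
pose z' : Cp R X := exist _ z (mem_set (KCp _ Kz)).
exists z'; apply: cluster_injective_limit_point binj _.
exact: (@cluster_set_val _ _ (b @ \oo) z' _ bz).
Qed.

End pointwise_topology.

Section indicators.
Variables (R : realType) (X : topologicalType).

Lemma indic_not_continuous {C : set X} {x : X} : closure C x -> ~ C x ->
  ~ continuous (\1_C : X -> R).
Proof.
move=> Cx nCx /(_ x) /cvgrPdist_lt /(_ 1 ltr01) /Cx [y [Cy]].
by rewrite !indicE (mem_set Cy) memNset //= sub0r normrN normr1 ltxx.
Qed.

Lemma indic_ptws_closure (A : set X) :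
  closure [set (\1_F : RX R X) | F in [set F | F `<=` A /\ finite_set F]] \1_A.
Proof.
pose Fs := filter_from [set: seq X]
  (fun s => [set s' : seq X | {subset s <= s'}]).
have Fs_filter : Filter Fs.
  apply: filter_from_filter; first by exists [::].
  move=> s1 s2 _ _; exists (s1 ++ s2) => // s' sub.
  by split => y ys; apply: sub; rewrite mem_cat ys ?orbT.
pose ind (s : seq X) : RX R X := \1_(A `&` [set` s]).
have ind_cvg : ind @ Fs --> (\1_A : RX R X).
  apply/pointwise_cvgP => x V Vx.
  exists [:: x] => // s /(_ x (mem_head _ _)) xs.
  rewrite /= /ind !indicE; suff -> : (x \in A `&` [set` s]) = (x \in A).
    exact: nbhs_singleton.
  by apply/idP/idP; rewrite !inE; [case|split].
move=> W /ind_cvg [s _ sW]; exists (ind s); split; last exact: sW.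
exists (A `&` [set` s]) => //.
by split; [exact: subIsetl|exact/finite_setIr/finite_seq].
Qed.

End indicators.

Section almost_discrete.
Variables (R : realType) (X : topologicalType) (p : X).
Hypothesis isolated_other : forall y, y <> p -> nbhs y [set y].

Lemma continuous_at_nonisolated {Y : topologicalType} (f : X -> Y) :
  {for p, continuous f} -> continuous f.
Proof.
move=> fp x; have [->//|xp] := pselect (x = p).
move=> V /nbhs_singleton fxV; have := isolated_other x xp.
by apply: filterS => y ->.
Qed.

Lemma relatively_countably_compact_closure_continuous {A : set (Cp R X)}
    {g : RX R X} : tightness_omega X -> relatively_countably_compact A ->
  closure (val @` A) g -> continuous (g : X -> R).
Proof.
move=> tight Arcc Ag; apply: continuous_at_nonisolated.
apply/cvgrPdist_lt => e e0; apply: contrapT => gfar.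
pose S := [set y | e <= `|g p - g y|].
have pS : closure S p.
  move=> U pU; apply: contrapT => US; apply: gfar; apply: filterS pU => y Uy.
  by rewrite ltNge; apply/negP => gy; apply: US; exists y.
have [B [BS Bcount] pB] := tight S p pS.
have [s sB Bs] : exists2 s : nat -> X, (forall n, B (s n)) &
    forall y, B y -> exists n, s n = y.
  by apply: countable_enum => //; have [y [By _]] := pB _ filterT; exists y.
pose t n := if n is n'.+1 then s n' else p.
have [f Af fg] := @ptws_closure_seq R X A g t Ag.
have [h fh] := relatively_countably_compact_cluster (Cp_accessible R X) Arcc Af.
have hg n : val h (t n) = g (t n) by exact: Cp_cluster_eval fh (fg n).
have hcont : continuous (val h : X -> R) := set_valP h.
have /cvgrPdist_lt/(_ e e0) hp := hcont p.
have [_ [/Bs [n <-] sn_close]] := pB _ hp.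
have := BS _ (sB n); rewrite /S /= -(hg 0%N) -(hg n.+1) /=.
by rewrite leNgt sn_close.
Qed.

Lemma tightness_omega_weakly_grothendieck :
  tightness_omega X -> weakly_grothendieck R X.
Proof.
move=> tight A Arcc F PF FA.
have /choice [M AM] :=
  fun x => @relatively_countably_compact_Cp_bounded R X A x Arcc.
pose K := [set k : RX R X | forall x, `[- M x, M x]%classic (k x)].
have Kcompact : compact K :=
  tychonoff (fun x => @segment_compact R (- M x) (M x)).
have clAK : val @` closure A `<=` K.
  move=> k /(image_closure_subset (@set_val_continuous _ _)) clAk.
  apply: (compact_closed (RX_hausdorff R X) Kcompact); move: clAk.
  apply: closureS => _ [a Aa <-] x /=; rewrite in_itv /= -ler_norml; exact: AM.
have FK : F (val @^-1` K) by apply: filterS FA => k Ak; apply: clAK; exists k.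
have [g [Kg Fg]] : K `&` cluster (val @ F) !=set0 by exact: Kcompact.
have Ag : closure (val @` A) g.
  have FclA : F (val @^-1` (val @` closure A)).
    by apply: filterS FA => k Ak; exists k.
  apply/closed_closure.
  apply/(closureS (image_closure_subset (@set_val_continuous _ _))).
  by move: Fg; rewrite clusterE; apply.
have gcont := relatively_countably_compact_closure_continuous tight Arcc Ag.
pose g' : Cp R X := exist _ g (mem_set gcont).
have Fg' : cluster F g' := @cluster_set_val _ _ F g' PF Fg.
exists g'; split => //; apply: closed_closure.
by move: Fg'; rewrite clusterE; apply.
Qed.

Lemma continuous_vanishing_near {k : X -> R} {U : set X} : nbhs p U ->
  (forall y, U y -> k y = 0) -> continuous k.
Proof.
move=> pU k0; apply: continuous_at_nonisolated => V.
rewrite (k0 p (nbhs_singleton pU)) => /nbhs_singleton V0.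
by move: pU; apply: filterS => y /k0 /= ->.
Qed.

Lemma indic_continuous {C : set X} :
  ~ closure C p -> continuous (\1_C : X -> R).
Proof.
move=> /not_closure_nbhsC pC; apply: continuous_vanishing_near pC _ => y nCy.
by rewrite indicE memNset.
Qed.

Definition countable_indicators (A : set X) : set (Cp R X) :=
  [set k | exists C, [/\ C `<=` A, countable C & val k = \1_C]].

Lemma countable_indicators_relatively_countably_compact {A : set X} :
  (forall C, C `<=` A -> countable C -> ~ closure C p) ->
  relatively_countably_compact (countable_indicators A).
Proof.
move=> Anot B BA /infinite_set_injective_seq [b binj Bb].
have /choice [C bC] : forall n,
    exists C, [/\ C `<=` A, countable C & val (b n) = \1_C].
  by move=> n; exact: BA.
pose Cu := \bigcup_(n in [set: nat]) C n.
have CuA : Cu `<=` A by move=> y [n _]; have [+ _ _] := bC n; apply.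
have Cucount : countable Cu.
  by apply: bigcup_countable => // n _; have [_ + _] := bC n.
(* the elements of K vanish off Cu, hence on a neighbourhood of p *)
pose K := [set k : RX R X | forall y, `[0, \1_Cu y]%classic (k y)].
have Kcompact : compact K :=
  tychonoff (fun y => @segment_compact R 0 (\1_Cu y)).
have KCp : K `<=` Cp_set R X.
  move=> k Kk; have pCu := not_closure_nbhsC (Anot _ CuA Cucount).
  rewrite /Cp_set; apply: (continuous_vanishing_near pCu).
  move=> y nCuy; have := Kk y; rewrite indicE memNset //= in_itv /=.
  by move=> /andP[k0 k0']; apply/eqP; rewrite eq_le k0 k0'.
have Kb n : K (val (b n)).
  have [_ _ ->] := bC n => y; rewrite /= in_itv /= !indicE.
  have [/set_mem yC|_] := boolP (y \in C n); last by rewrite lexx ler0n.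
  by rewrite (mem_set (_ : Cu y)) ?lexx ?ler01 //; exists n.
have [z bz] := compact_Cp_limit_point _ _ Kcompact KCp binj Kb.
exists z => U zU; have [y [yz [n _ bny] Uy]] := bz U zU.
by exists y; split => //; rewrite -bny.
Qed.

Lemma weakly_grothendieck_tightness_omega :
  weakly_grothendieck R X -> tightness_omega X.
Proof.
move=> wg A x Ax; have [xA|nxA] := pselect (A x).
  exists [set x]; last exact: subset_closure.
  by split; [move=> _ -> | exact: countable1].
have xp : x = p.
  by apply: contrapT => /isolated_other /Ax [y [Ay yx]]; move: Ay; rewrite yx.
subst x; apply: contrapT => no_countable.
have Anot C : C `<=` A -> countable C -> ~ closure C p.
  by move=> CA Ccount pC; apply: no_countable; exists C.
pose I := countable_indicators A.
have Iclosed : closed (val @` closure I : set (RX R X)).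
  apply: compact_closed (RX_hausdorff R X) _.
  apply: continuous_compact; last exact: wg _ (countable_indicators_relatively_countably_compact Anot).
  by apply: continuous_subspaceT; exact: set_val_continuous.
have [k _ kA] : (val @` closure I) \1_A.
  apply: Iclosed; move: (indic_ptws_closure R X A); apply: closureS.
  move=> _ [F [FA Ffin] <-].
  have Fcont := indic_continuous (Anot _ FA (finite_set_countable Ffin)).
  exists (exist _ \1_F (mem_set Fcont)); last by [].
  apply: subset_closure; exists F; split => //; exact: finite_set_countable.
by apply: (indic_not_continuous R X Ax nxA); rewrite -kA; exact: (set_valP k).
Qed.

End almost_discrete.

Theorem corollary2 (R : realType) (X : topologicalType) :
  tychonoff_space R X -> almost_discrete X ->
  (weakly_grothendieck R X <-> tightness_omega X).
Proof.
move=> _ [p [_ isolated_other]].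
have nbhs_isolated y : y <> p -> nbhs y [set y].
  by move=> /isolated_other [_ [V Vy <-]]; rewrite setIT.
split; first exact: weakly_grothendieck_tightness_omega nbhs_isolated.
exact: tightness_omega_weakly_grothendieck nbhs_isolated.
Qed.
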